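(* Let $q$ be an odd prime power, let $\omega$ be a non-square in $\mathbb F_q$ and $\epsilon\in\mathbb F_{q^2}$ with $\epsilon^2=\omega$, and write every $z\in\mathbb F_{q^2}$ as $z=z_1+\epsilon z_2$ with $z_1,z_2\in\mathbb F_q$. Let $\mathcal C: aX^2+bXY+cXZ+dYZ+eZ^2=0$ be a non-singular conic of $\mathrm{PG}(2,q^2)$ with $a,b,c,d,e\in\mathbb F_{q^2}$, $b\ne0$. Put $A=-a_2b_1+a_1b_2$, $B=b_2c_1-b_1c_2-a_2d_1+a_1d_2$, $C=-c_2d_1+c_1d_2+b_2e_1-b_1e_2$, $D=d_2e_1-d_1e_2$, and let $\mathcal S$ be the cubic surface of $\mathrm{PG}(3,q)$, in homogeneous coordinates $(t_1:t_2:X:Z)$, with equation $$2t_1t_2(b_1X+d_1Z)-(t_1^2+\omega t_2^2)(b_2X+d_2Z)+AX^3+BX^2Z+CXZ^2+DZ^3=0.$$ Then $\mathcal S$ is irreducible if and only if $b_1d_2-b_2d_1\neq0$.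
   Context: Irreducibility is understood over the algebraic closure of $\mathbb F_q$. *)

From HB Require Import structures.
From mathcomp Require Import all_boot all_order all_algebra all_field.
From mathcomp Require Import mpoly.
Set Implicit Arguments. Unset Strict Implicit. Unset Printing Implicit Defensive.
Import Order.TTheory GRing.Theory.
Local Open Scope ring_scope.

Definition mirreducible (K : fieldType) (n : nat) (p : {mpoly K[n]}) : Prop :=
  (1 < msize p)%N /\
  forall r s : {mpoly K[n]}, p = r * s -> (msize r <= 1)%N \/ (msize s <= 1)%N.

Definition abs_irreducible (F : fieldType) (n : nat) (p : {mpoly F[n]}) : Prop :=
  forall (K : closedFieldType) (f : {rmorphism F -> K}),
    mirreducible (map_mpoly f p).

(* Gram matrix of the quadratic form  aX^2+bXY+cXZ+dYZ+eZ^2  (char <> 2). *)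
Definition conic_matrix (L : fieldType) (a b c d e : L) : 'M[L]_3 :=
  \matrix_(i < 3, j < 3)
    nth 0 (nth [::] [:: [:: a; b / 2%:R; c / 2%:R];
                        [:: b / 2%:R; 0; d / 2%:R];
                        [:: c / 2%:R; d / 2%:R; e]] i) j.

Definition conic_nonsingular (L : fieldType) (a b c d e : L) : bool :=
  \det (conic_matrix a b c d e) != 0.

Definition cubic_surface (F : fieldType) (w a1 a2 b1 b2 c1 c2 d1 d2 e1 e2 : F)
  : {mpoly F[4]} :=
  let t1 := 'X_(0 : 'I_4) in let t2 := 'X_(1 : 'I_4) in
  let X := 'X_(2 : 'I_4) in let Z := 'X_(3 : 'I_4) in
  let A := - a2 * b1 + a1 * b2 in
  let B := b2 * c1 - b1 * c2 - a2 * d1 + a1 * d2 in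
  let C := - c2 * d1 + c1 * d2 + b2 * e1 - b1 * e2 in
  let D := d2 * e1 - d1 * e2 in
  2%:R%:MP * t1 * t2 * (b1%:MP * X + d1%:MP * Z)
  - (t1 ^+ 2 + w%:MP * t2 ^+ 2) * (b2%:MP * X + d2%:MP * Z)
  + A%:MP * X ^+ 3 + B%:MP * X ^+ 2 * Z + C%:MP * X * Z ^+ 2 + D%:MP * Z ^+ 3.

From HB Require Import structures.
From mathcomp Require Import all_boot all_order all_algebra all_field.
From mathcomp Require Import mpoly.
From mathcomp Require Import zify ring.
Import GRing.Theory.
Local Open Scope ring_scope.

(* The cubic form is S = 2 t1 t2 u - (t1^2 + w t2^2) v + G(X, Z) with
   u = b1 X + d1 Z and v = b2 X + d2 Z.
   If b1 d2 = b2 d1 then (d1, d2) = l (b1, b2) and S = (X + l Z) Q over F_q.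
   Otherwise u and v are independent.  A factorisation of the cubic S over any
   field has a linear factor, so S would vanish on a plane
   c0 + al t1 + be t2 + ga X + de Z = 0.  Along the direction (be, -al) of the
   plane the second difference of S is -2 (2 al be u + (be^2 + w al^2) v); it
   then vanishes for all X, Z, which forces al = be = 0.  And S vanishes
   identically in (t1, t2) only where u = v = 0, i.e. at X = Z = 0, which rules
   out the remaining planes c0 + ga X + de Z = 0. *)

Lemma finField_odd_card_natr2_neq0 {F : finFieldType} :
  odd #|F| -> 2%:R != 0 :> F.
Proof.
move=> oddF; apply/negP => /eqP char2.
have char2F : 2%N \in [pchar F] by rewrite inE /= char2 eqxx.
have cardF := card_pprimeChar char2F.
move: oddF; rewrite cardF oddX orbF => /eqP n0.
by have := finNzRing_gt1 F; rewrite cardF n0.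
Qed.

Section TwoByTwo.

Context {K : fieldType}.

Lemma det2_kernel0 {p q r s x y : K} :
  p * s - q * r != 0 -> p * x + q * y = 0 -> r * x + s * y = 0 ->
  x = 0 /\ y = 0.
Proof.
move=> det_neq0 eq1 eq2; split; apply/eqP.
- rewrite -(mulIr_eq0 _ (mulIf det_neq0)).
  have -> : x * (p * s - q * r) = s * (p * x + q * y) - q * (r * x + s * y).
    by ring.
  by rewrite eq1 eq2 !mulr0 subr0.
- rewrite -(mulIr_eq0 _ (mulIf det_neq0)).
  have -> : y * (p * s - q * r) = p * (r * x + s * y) - r * (p * x + q * y).
    by ring.
  by rewrite eq1 eq2 !mulr0 subr0.
Qed.

Lemma det2_eq0_proportional {p q r s : K} :
  p * s - q * r = 0 -> (p != 0) || (q != 0) -> exists l, r = l * p /\ s = l * q.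
Proof.
move=> /eqP; rewrite subr_eq0 => /eqP det0.
have [p0 | p_neq0] := eqVneq p 0; last first.
  exists (r / p); split; first by rewrite divfK.
  by apply: (mulfI p_neq0); rewrite det0; field.
move=> /= q_neq0; exists (s / q); split; last by rewrite divfK.
move: det0; rewrite p0 mul0r mulr0 => /esym /eqP.
by rewrite mulf_eq0 (negPf q_neq0) => /eqP.
Qed.

End TwoByTwo.

Section AffineMpoly.

Context {n : nat} {R : comNzRingType}.
Implicit Types (p : {mpoly R[n]}) (x y : 'I_n -> R).

Lemma msize_gt1_meval p x y : meval x p != meval y p -> (1 < msize p)%N.
Proof. by rewrite ltnNge; apply: contra => /msize1_polyC ->; rewrite !mevalC. Qed.

Lemma mpoly_affineE p :
  (msize p <= 2)%N -> p = (p@_0%MM)%:MP + \sum_i p@_U_(i) *: 'X_i.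
Proof.
move=> p_le2; apply/mpolyP => m.
rewrite mcoeffD mcoeffC raddf_sum /=.
under eq_bigr => i _ do rewrite mcoeffZ mcoeffX.
have [-> | m_neq0] := eqVneq m 0%MM.
  rewrite mulr1 big1 ?addr0 // => i _.
  case: eqP => [U_i0 | _]; last by rewrite mulr0.
  by have := mdeg1 i; rewrite U_i0 mdeg0.
rewrite mulr0 add0r.
have [/mdeg1P [j /eqP ->] | mdeg_neq1] := boolP (mdeg m == 1%N).
  rewrite (bigD1 j) //= eqxx mulr1 big1 ?addr0 // => i ij.
  case: eqP => [U_ij | _]; last by rewrite mulr0.
  have := congr1 (fun mm : 'X_{1..n} => mm j) U_ij.
  by rewrite /= !mnm1E eqxx (negPf ij).
rewrite big1; last first.
  move=> i _; case: eqP => [U_im | _]; last by rewrite mulr0.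
  by rewrite -U_im mdeg1 eqxx in mdeg_neq1.
apply: memN_msupp_eq0; apply: msize_mdeg_ge; apply: leq_trans p_le2 _.
move: mdeg_neq1 (mdeg_eq0 m); rewrite (negPf m_neq0).
by case: (mdeg m) => [|[|k]].
Qed.

Lemma meval_affine p x :
  (msize p <= 2)%N -> meval x p = p@_0%MM + \sum_i p@_U_(i) * x i.
Proof.
move=> /mpoly_affineE {1}->; rewrite rmorphD /= mevalC raddf_sum /=.
by under eq_bigr => i _ do rewrite mevalZ mevalXU.
Qed.

End AffineMpoly.

Section DegreeBound.

Context {n : nat} {R : idomainType}.
Implicit Types (p q : {mpoly R[n]}) (i j : nat).

Lemma msizeD_leS i j p q :
  (msize p <= i.+1 -> msize q <= j.+1 -> msize (p + q) <= (maxn i j).+1)%N.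
Proof.
move=> p_le q_le; apply: leq_trans (msizeD_le _ _) _.
by rewrite geq_max -maxnSS !leq_max p_le q_le orbT.
Qed.

Lemma msizeM_leS i j p q :
  (msize p <= i.+1 -> msize q <= j.+1 -> msize (p * q) <= (i + j).+1)%N.
Proof.
move=> p_le q_le.
have [-> | p_neq0] := eqVneq p 0; first by rewrite mul0r msize0.
have [-> | q_neq0] := eqVneq q 0; first by rewrite mulr0 msize0.
by rewrite msizeM // -subn1; move: (msize p) (msize q) p_le q_le => a b; lia.
Qed.

Lemma msizeX_leS i k p : (msize p <= i.+1 -> msize (p ^+ k) <= (i * k).+1)%N.
Proof.
move=> p_le; elim: k => [|k IHk]; first by rewrite expr0 msize1.
by rewrite exprS mulnS; apply: msizeM_leS.
Qed.

Lemma msizeC_leS (c : R) : (msize c%:MP_[n] <= 0.+1)%N.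
Proof. by rewrite msizeC leq_b1. Qed.

Lemma msizeXU_leS (k : 'I_n) : (msize ('X_k : {mpoly R[n]}) <= 1.+1)%N.
Proof. by rewrite msizeX mdeg1. Qed.

End DegreeBound.

Ltac msize_bound :=
  repeat first [ apply: msizeD_leS | rewrite msizeN | apply: msizeM_leS
               | apply: msizeX_leS | apply: msizeC_leS | apply: msizeXU_leS ].

Lemma map_cubic_surface {F K : fieldType} (f : {rmorphism F -> K})
    (w a1 a2 b1 b2 c1 c2 d1 d2 e1 e2 : F) :
  map_mpoly f (cubic_surface w a1 a2 b1 b2 c1 c2 d1 d2 e1 e2) =
  cubic_surface (f w) (f a1) (f a2) (f b1) (f b2) (f c1) (f c2) (f d1) (f d2)
    (f e1) (f e2).
Proof.
rewrite /cubic_surface !(rmorphD, rmorphB, rmorphM, rmorphN, rmorphXn) /=.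
have f1 : (f 1)%:MP = 1 :> {mpoly K[4]} by rewrite rmorph1.
by rewrite !map_mpolyC !map_mpolyX f1 -!expr2.
Qed.

Definition point4 {R : nzRingType} (t1 t2 X Z : R) : 'I_4 -> R :=
  fun i => [:: t1; t2; X; Z]`_i.

Section CubicSurface.

Context {K : fieldType}.
Variables (w a1 a2 b1 b2 c1 c2 d1 d2 e1 e2 : K).

Let S := cubic_surface w a1 a2 b1 b2 c1 c2 d1 d2 e1 e2.

Definition cubic_form (t1 t2 X Z : K) : K :=
  2%:R * t1 * t2 * (b1 * X + d1 * Z) - (t1 ^+ 2 + w * t2 ^+ 2) * (b2 * X + d2 * Z)
  + (- a2 * b1 + a1 * b2) * X ^+ 3
  + (b2 * c1 - b1 * c2 - a2 * d1 + a1 * d2) * X ^+ 2 * Z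
  + (- c2 * d1 + c1 * d2 + b2 * e1 - b1 * e2) * X * Z ^+ 2
  + (d2 * e1 - d1 * e2) * Z ^+ 3.

Lemma meval_cubic_surface t1 t2 X Z :
  meval (point4 t1 t2 X Z) S = cubic_form t1 t2 X Z.
Proof.
by rewrite /S /cubic_surface !(rmorphD, rmorphB, rmorphM, rmorphN, rmorphXn) /=
  !mevalC !mevalXU.
Qed.

Lemma cubic_form_second_difference t1 t2 X Z s1 s2 :
  cubic_form (t1 + s1) (t2 + s2) X Z + cubic_form (t1 - s1) (t2 - s2) X Z
    - 2%:R * cubic_form t1 t2 X Z
  = 2%:R * (2%:R * s1 * s2 * (b1 * X + d1 * Z)
            - (s1 ^+ 2 + w * s2 ^+ 2) * (b2 * X + d2 * Z)).
Proof. by rewrite /cubic_form; ring. Qed.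

Lemma cubic_form_diff10 X Z :
  cubic_form 0 0 X Z - cubic_form 1 0 X Z = b2 * X + d2 * Z.
Proof. by rewrite /cubic_form; ring. Qed.

Lemma cubic_form_diff11 X Z :
  cubic_form 1 1 X Z - cubic_form 1 0 X Z + w * (b2 * X + d2 * Z)
  = 2%:R * (b1 * X + d1 * Z).
Proof. by rewrite /cubic_form; ring. Qed.

Hypothesis two_neq0 : 2%:R != 0 :> K.

Definition quadric_cofactor : {mpoly K[4]} :=
  let t1 := 'X_(0 : 'I_4) in let t2 := 'X_(1 : 'I_4) in
  let X := 'X_(2 : 'I_4) in let Z := 'X_(3 : 'I_4) in
  2%:R%:MP * b1%:MP * t1 * t2 - b2%:MP * (t1 ^+ 2 + w%:MP * t2 ^+ 2)
  + b2%:MP * (a1%:MP * X ^+ 2 + c1%:MP * X * Z + e1%:MP * Z ^+ 2)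
  - b1%:MP * (a2%:MP * X ^+ 2 + c2%:MP * X * Z + e2%:MP * Z ^+ 2).

Lemma cubic_surface_proportionalE {l : K} :
  d1 = l * b1 -> d2 = l * b2 ->
  S = ('X_(2 : 'I_4) + l%:MP * 'X_(3 : 'I_4)) * quadric_cofactor.
Proof.
rewrite /S /cubic_surface /quadric_cofactor => -> ->.
by rewrite !(rmorphM, rmorphD, rmorphB, rmorphN, rmorph_nat) /=; ring.
Qed.

Lemma meval_quadric_cofactor t1 t2 :
  meval (point4 t1 t2 0 0) quadric_cofactor
  = 2%:R * b1 * t1 * t2 - b2 * (t1 ^+ 2 + w * t2 ^+ 2).
Proof.
rewrite /quadric_cofactor !(rmorphD, rmorphB, rmorphM, rmorphN, rmorphXn) /=.
by rewrite !mevalC !mevalXU /point4 /=; ring.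
Qed.

Lemma msize_quadric_cofactor_gt1 :
  (b1 != 0) || (b2 != 0) -> (1 < msize quadric_cofactor)%N.
Proof.
move=> b_neq0; have [b20 | b2_neq0] := eqVneq b2 0.
  have b1_neq0 : b1 != 0 by move: b_neq0; rewrite b20 eqxx orbF.
  apply: (@msize_gt1_meval _ _ _ (point4 1 1 0 0) (point4 0 0 0 0)).
  rewrite -subr_eq0 !meval_quadric_cofactor.
  by rewrite (_ : _ - _ = 2%:R * b1) ?mulf_neq0 // b20; ring.
apply: (@msize_gt1_meval _ _ _ (point4 0 0 0 0) (point4 1 0 0 0)).
by rewrite -subr_eq0 !meval_quadric_cofactor (_ : _ - _ = b2) //; ring.
Qed.

Lemma cubic_surface_reducible :
  (b1 != 0) || (b2 != 0) -> b1 * d2 - b2 * d1 = 0 -> ~ mirreducible S.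
Proof.
move=> b_neq0 det0 [_ S_irr].
have [l [d1E d2E]] := det2_eq0_proportional det0 b_neq0.
have [] := S_irr _ _ (cubic_surface_proportionalE d1E d2E).
all: rewrite leqNgt; apply/negP/negPn.
  apply: (@msize_gt1_meval _ _ _ (point4 0 0 1 0) (point4 0 0 0 0)).
  rewrite !(rmorphD, rmorphM) /= !mevalXU !mevalC /point4 /=.
  by rewrite !mulr0 !addr0 oner_neq0.
exact: msize_quadric_cofactor_gt1.
Qed.

Hypotheses (w_neq0 : w != 0) (det_neq0 : b1 * d2 - b2 * d1 != 0).

Lemma cubic_form_plane_t_coef0 {c0 al be ga de : K} :
  (forall t1 t2 X Z, c0 + al * t1 + be * t2 + ga * X + de * Z = 0 ->
     cubic_form t1 t2 X Z = 0) ->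
  al = 0 /\ be = 0.
Proof.
move=> S_plane.
have [/andP [/eqP -> /eqP ->] // | al_be_neq0] := boolP ((al == 0) && (be == 0)).
pose f := 2%:R * al * be; pose e := be ^+ 2 + w * al ^+ 2.
have uv_eq0 X Z : (b1 * X + d1 * Z) * f + (b2 * X + d2 * Z) * e = 0.
  have [t1 [t2 on_plane]] :
      exists t1 t2, c0 + al * t1 + be * t2 + ga * X + de * Z = 0.
    have [al0 | al_neq0] := eqVneq al 0.
      have be_neq0 : be != 0 by move: al_be_neq0; rewrite al0 eqxx.
      by exists 0, (- (c0 + ga * X + de * Z) / be); rewrite al0; field.
    by exists (- (c0 + ga * X + de * Z) / al), 0; field.
  have on_plane_fwd :
      c0 + al * (t1 + be) + be * (t2 + - al) + ga * X + de * Z = 0.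
    by rewrite -on_plane; ring.
  have on_plane_bwd :
      c0 + al * (t1 - be) + be * (t2 - - al) + ga * X + de * Z = 0.
    by rewrite -on_plane; ring.
  have := cubic_form_second_difference t1 t2 X Z be (- al).
  rewrite (S_plane _ _ _ _ on_plane_fwd) (S_plane _ _ _ _ on_plane_bwd).
  rewrite (S_plane _ _ _ _ on_plane) add0r mulr0 subr0 => /esym /eqP.
  rewrite mulf_eq0 (negPf two_neq0) /= => /eqP diff0.
  have -> : (b1 * X + d1 * Z) * f + (b2 * X + d2 * Z) * e
    = - (2%:R * be * - al * (b1 * X + d1 * Z)
         - (be ^+ 2 + w * (- al) ^+ 2) * (b2 * X + d2 * Z)).
    by rewrite /f /e; ring.
  by rewrite diff0 oppr0.
have uv10 : b1 * f + b2 * e = 0.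
  by have := uv_eq0 1 0; rewrite !mulr1 !mulr0 !addr0.
have uv01 : d1 * f + d2 * e = 0.
  by have := uv_eq0 0 1; rewrite !mulr1 !mulr0 !add0r.
have [f0 e0] := det2_kernel0 det_neq0 uv10 uv01.
move/eqP: f0; rewrite /f !mulf_eq0 (negPf two_neq0) /= => /orP [] /eqP z.
  by move: e0; rewrite /e z expr0n mulr0 addr0 => /eqP; rewrite expf_eq0 => /eqP.
move: e0; rewrite /e z expr0n add0r => /eqP.
by rewrite mulf_eq0 (negPf w_neq0) expf_eq0 => /eqP.
Qed.

Lemma cubic_form_zero_in_t X Z :
  (forall t1 t2, cubic_form t1 t2 X Z = 0) -> X = 0 /\ Z = 0.
Proof.
move=> S_t.
have v0 : b2 * X + d2 * Z = 0 by rewrite -cubic_form_diff10 !S_t subr0.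
have u0 : b1 * X + d1 * Z = 0.
  have /eqP : 2%:R * (b1 * X + d1 * Z) = 0.
    by rewrite -cubic_form_diff11 !S_t v0 subr0 mulr0 addr0.
  by rewrite mulf_eq0 (negPf two_neq0) => /eqP.
apply: (det2_kernel0 _ u0 v0).
by rewrite [d1 * b2]mulrC.
Qed.

Lemma cubic_form_plane_XZ_coef0 {c0 ga de : K} :
  (forall t1 t2 X Z, c0 + ga * X + de * Z = 0 -> cubic_form t1 t2 X Z = 0) ->
  ga = 0 /\ de = 0.
Proof.
move=> S_plane.
have on_line X Z : c0 + ga * X + de * Z = 0 -> X = 0 /\ Z = 0.
  by move=> XZ_line; apply: cubic_form_zero_in_t => t1 t2; apply: S_plane.
split.
  have [// | ga_neq0] := eqVneq ga 0.
  have [_ /eqP] := on_line (- (c0 + de) / ga) 1 ltac:(field; exact: ga_neq0).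
  by rewrite oner_eq0.
have [// | de_neq0] := eqVneq de 0.
have [/eqP] := on_line 1 (- (c0 + ga) / de) ltac:(field; exact: de_neq0).
by rewrite oner_eq0.
Qed.

Lemma cubic_form_plane_coef0 {c0 al be ga de : K} :
  (forall t1 t2 X Z, c0 + al * t1 + be * t2 + ga * X + de * Z = 0 ->
     cubic_form t1 t2 X Z = 0) ->
  [/\ al = 0, be = 0, ga = 0 & de = 0].
Proof.
move=> S_plane; have [al0 be0] := cubic_form_plane_t_coef0 S_plane.
have [ga0 de0] : ga = 0 /\ de = 0.
  apply: (@cubic_form_plane_XZ_coef0 c0) => t1 t2 X Z on_plane.
  by apply: S_plane; rewrite al0 be0 !mul0r !addr0.
by [].
Qed.

Lemma cubic_surface_no_linear_factor {r s : {mpoly K[4]}} :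
  S = r * s -> msize r <> 2%N.
Proof.
move=> S_rs r_size2.
have r_le2 : (msize r <= 2)%N by rewrite r_size2.
have S_plane t1 t2 X Z :
    r@_0%MM + r@_U_(0 : 'I_4) * t1 + r@_U_(1 : 'I_4) * t2
      + r@_U_(2 : 'I_4) * X + r@_U_(3 : 'I_4) * Z = 0 ->
    cubic_form t1 t2 X Z = 0.
  move=> on_plane; rewrite -meval_cubic_surface S_rs mevalM.
  suff -> : meval (point4 t1 t2 X Z) r = 0 by rewrite mul0r.
  rewrite meval_affine // !big_ord_recl big_ord0 addr0 !addrA.
  exact: on_plane.
have [r0 r1 r2 r3] := cubic_form_plane_coef0 S_plane.
suff : (msize r <= 1)%N by rewrite r_size2.
rewrite (mpoly_affineE r r_le2) !big_ord_recl big_ord0.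
have -> : r@_U_(ord0 : 'I_4) = 0 by exact: r0.
have -> : r@_U_(lift ord0 (ord0 : 'I_3)) = 0 by exact: r1.
have -> : r@_U_(lift ord0 (lift ord0 (ord0 : 'I_2))) = 0 by exact: r2.
have -> : r@_U_(lift ord0 (lift ord0 (lift ord0 (ord0 : 'I_1)))) = 0 by exact: r3.
by rewrite !scale0r !addr0 msizeC leq_b1.
Qed.

Lemma msize_cubic_surface_gt1 : (1 < msize S)%N.
Proof.
pose X := - d1 / (b1 * d2 - b2 * d1); pose Z := b1 / (b1 * d2 - b2 * d1).
apply: (@msize_gt1_meval _ _ _ (point4 0 0 X Z) (point4 1 0 X Z)).
rewrite !meval_cubic_surface -subr_eq0 cubic_form_diff10.
have -> : b2 * X + d2 * Z = 1 by rewrite /X /Z; field.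
exact: oner_neq0.
Qed.

Lemma msize_cubic_surface : (msize S <= 4)%N.
Proof.
have [k S_le k_le3] : exists2 k, (msize S <= k.+1)%N & (k <= 3)%N.
  by eexists; [rewrite /S /cubic_surface; msize_bound |].
exact: leq_trans S_le _.
Qed.

Lemma mirreducible_cubic_surface : mirreducible S.
Proof.
split; first exact: msize_cubic_surface_gt1.
move=> r s S_rs.
have [r_le1 | r_gt1] := leqP (msize r) 1; first by left.
have [s_le1 | s_gt1] := leqP (msize s) 1; first by right.
have r_neq0 : r != 0 by apply: contraTneq r_gt1 => ->; rewrite msize0.
have s_neq0 : s != 0 by apply: contraTneq s_gt1 => ->; rewrite msize0.
have := msize_cubic_surface; rewrite S_rs msizeM // => rs_le4.
have [r_le2 | r_gt2] := leqP (msize r) 2.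
  case: (cubic_surface_no_linear_factor S_rs).
  by apply/eqP; rewrite eqn_leq r_le2.
case: (@cubic_surface_no_linear_factor s r); first by rewrite S_rs mulrC.
by apply/eqP; move: rs_le4 r_gt2 s_gt1; move: (msize r) (msize s) => x y; lia.
Qed.

End CubicSurface.

Theorem mainTheorem5
  (F : finFieldType) (L : fieldExtType F)
  (hq : odd #|F|) (hL : \dim {:L} = 2%N)
  (w : F) (hw : ~ exists x : F, x ^+ 2 = w)
  (eps : L) (heps : eps ^+ 2 = w%:A)
  (a1 a2 b1 b2 c1 c2 d1 d2 e1 e2 : F) :
  let a := a1%:A + eps * a2%:A in
  let b := b1%:A + eps * b2%:A in
  let c := c1%:A + eps * c2%:A in
  let d := d1%:A + eps * d2%:A in
  let e := e1%:A + eps * e2%:A in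
  b != 0 ->
  conic_nonsingular a b c d e ->
  (abs_irreducible (cubic_surface w a1 a2 b1 b2 c1 c2 d1 d2 e1 e2)
   <-> b1 * d2 - b2 * d1 != 0).
Proof.
move=> a b c d e b_neq0 _.
have two_neq0 := finField_odd_card_natr2_neq0 hq.
have w_neq0 : w != 0 by apply/eqP => w0; apply: hw; exists 0; rewrite w0 expr0n.
have b12_neq0 : (b1 != 0) || (b2 != 0).
  apply: contraNT b_neq0; rewrite negb_or !negbK => /andP [/eqP b10 /eqP b20].
  by rewrite /b b10 b20 !scale0r mulr0 addr0.
split => [S_abs_irr | det_neq0 K f].
  apply/negP => /eqP det0.
  have [K [f _]] := countable_algebraic_closure F.
  have := S_abs_irr K f; rewrite map_cubic_surface.
  apply: cubic_surface_reducible.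
  - by rewrite -(rmorph_nat f) fmorph_eq0.
  - by rewrite !fmorph_eq0.
  - by rewrite -!rmorphM -rmorphB det0 rmorph0.
rewrite map_cubic_surface; apply: mirreducible_cubic_surface.
- by rewrite -(rmorph_nat f) fmorph_eq0.
- by rewrite fmorph_eq0.
- by rewrite -!rmorphM -rmorphB fmorph_eq0.
Qed.
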